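(* Let $G$ be a bipartite graph, $M$ a matching of $G$, $C$ an $M$-cycle or an $M$-path of $G$, and $x,y$ two vertices of $G - V(C)$ lying in different partite sets of $G$. (1) If $C$ is a cycle and $e_G(\{x,y\}, V(C)) \ge \frac{|C|}{2}+1$, then there is an edge $uv \in E(C)\setminus M$ with $e_G(\{x,y\},\{u,v\}) = 2$. (2) If $C$ is a path and $e_G(\{x,y\}, V(C)) \ge \frac{|C|}{2}+2$, then there is an edge $uv \in E(C)\setminus M$ with $e_G(\{x,y\},\{u,v\}) = 2$.
   Context: Graphs are finite and simple. A cycle $C$ is an $M$-cycle if $|E(C)\cap M|=|C|/2$. An $M$-path is a path whose edges alternate between edges of $M$ and edges not in $M$, beginning and ending with edges of $M$. $|C|$ is the number of vertices; $e_G(S,T)$ is the number of edges between disjoint vertex sets $S$ and $T$. *)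

From mathcomp Require Import all_boot.
Set Implicit Arguments. Unset Strict Implicit. Unset Printing Implicit Defensive.

Section Graphs.
Variable T : finType.

Definition simple_graph (g : rel T) : Prop :=
  symmetric g /\ irreflexive g.

(* A is one partite set of a bipartition of g (the other is ~: A) *)
Definition bipartition (g : rel T) (A : {set T}) : Prop :=
  forall u v, g u v -> (u \in A) != (v \in A).

(* edges are represented as 2-element vertex sets [set u; v] *)
Definition matching (g : rel T) (M : {set {set T}}) : Prop :=
  (forall m, m \in M -> exists u v, g u v /\ m = [set u; v]) /\
  (forall m1 m2, m1 \in M -> m2 \in M -> m1 != m2 -> [disjoint m1 & m2]).

(* e_G(S, U): number of edges between (disjoint) vertex sets S and U *)
Definition eG (g : rel T) (S U : {set T}) : nat :=
  #|[set p : T * T | [&& p.1 \in S, p.2 \in U & g p.1 p.2]]|.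

Definition is_cycle (g : rel T) (c : seq T) : Prop :=
  [/\ uniq c, 3 <= size c & cycle g c].

Definition cycle_edges (c : seq T) : {set {set T}} :=
  [set [set p.1; p.2] | p in zip c (rot 1 c)].

Definition M_cycle (g : rel T) (M : {set {set T}}) (c : seq T) : Prop :=
  is_cycle g c /\ #|cycle_edges c :&: M| = size c %/ 2.

Definition is_path (g : rel T) (p : seq T) : Prop :=
  [/\ uniq p, 2 <= size p & sorted g p].

Definition path_edge_seq (p : seq T) : seq {set T} :=
  [seq [set q.1; q.2] | q <- zip p (behead p)].

Definition path_edges (p : seq T) : {set {set T}} :=
  [set e in path_edge_seq p].

(* M-path: edges alternate M / non-M, first and last edge in M *)
Definition M_path (g : rel T) (M : {set {set T}}) (p : seq T) : Prop :=
  [/\ is_path g p,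
      (forall i, i < size (path_edge_seq p) ->
         (nth set0 (path_edge_seq p) i \in M) = ~~ odd i)
    & odd (size (path_edge_seq p))].

End Graphs.

From mathcomp Require Import all_boot zify.

Set Implicit Arguments. Unset Strict Implicit. Unset Printing Implicit Defensive.

(* Let w t in {0, 1} be the number of neighbours of t among x and y; it is at
   most 1 because x and y lie on different sides of the bipartition, and
   e_G({x,y}, S) is the sum of w over S.
   Cycle: C is even, and summing w over both ends of every edge of C counts
   every vertex twice.  The |C|/2 edges of M in C are pairwise disjoint, so
   they take at most sum_C w, and the remaining |C|/2 edges carry at least
   sum_C w > |C|/2; one of them has weight 2.
   Path v_0 ... v_(2k+1): the non-M edges v_(2j+1) v_(2j+2) pair off the
   interior vertices, whose total weight is at least (k + 3) - 2 > k, so again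
   one of these pairs has weight 2. *)

Lemma exists_gt1_of_card_lt_sum (I : finType) (P : {pred I}) (f : I -> nat) :
  #|P| < \sum_(i in P) f i -> exists2 i, i \in P & 1 < f i.
Proof.
move=> lt_card_sum; apply/exists_inP; apply: contraTT lt_card_sum.
move=> /exists_inPn le1; rewrite -leqNgt -sum1_card.
by apply: leq_sum => i iP; rewrite leqNgt le1.
Qed.

Lemma sum_double_range (f : nat -> nat) k :
  \sum_(0 <= i < k.*2) f i = \sum_(j < k) (f j.*2 + f j.*2.+1).
Proof.
elim: k => [|k IHk]; first by rewrite big_geq // big_ord0.
by rewrite doubleS !big_nat_recr //= IHk big_ord_recr -addnA.
Qed.

Lemma nth_rot1 (T : eqType) (x0 : T) s i : i < size s ->
  nth x0 (rot 1 s) i = nth x0 s (i.+1 %% size s).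
Proof.
case: s => [|a s] //= lt_i_s; rewrite rot1_cons nth_rcons.
move: lt_i_s; rewrite ltnS leq_eqVlt => /orP[/eqP-> | lt_is].
  by rewrite ltnn eqxx modnn.
by rewrite lt_is modn_small.
Qed.

Section Bipartite.
Variables (T : finType) (g : rel T) (A : {set T}).
Hypothesis bipA : bipartition g A.

Lemma bipartition_path_side a q :
  path g a q -> (last a q \in A) = (a \in A) (+) odd (size q).
Proof.
elim: q a => [|b q IHq] a /=; first by rewrite addbF.
case/andP=> gab /IHq ->; move/bipA: gab.
by case: (a \in A); case: (b \in A); case: (odd _).
Qed.

Lemma bipartite_cycle_even c : cycle g c -> ~~ odd (size c).
Proof.
case: c => [|a q] //= /bipartition_path_side.
by rewrite last_rcons size_rcons /=; case: (a \in A); case: (odd _).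
Qed.

Lemma bipartition_common_nbr x y t :
  (x \in A) != (y \in A) -> (g x t : nat) + g y t <= 1.
Proof.
case gxt: (g x t); case gyt: (g y t) => //.
by move: (bipA gxt) (bipA gyt); case: (x \in A); case: (y \in A); case: (t \in A).
Qed.

End Bipartite.

Lemma eG_sum (T : finType) (g : rel T) S U :
  eG g S U = \sum_(u in U) \sum_(s in S) (g s u : nat).
Proof.
rewrite /eG -sum1_card big_set /= big_mkcond /=.
rewrite -(pair_bigA _ (fun a b => if [&& a \in S, b \in U & g a b] then 1 else 0)).
rewrite exchange_big [RHS]big_mkcond; apply: eq_bigr => u _.
case: (u \in U); last by rewrite big1 // => s _; rewrite andbF.
by rewrite [RHS]big_mkcond; apply: eq_bigr => s _; case: (s \in S); case: (g s u).
Qed.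

Lemma sum_set2 (T : finType) (F : T -> nat) a b :
  a != b -> \sum_(t in [set a; b]) F t = F a + F b.
Proof. by move=> neq_ab; rewrite big_setU1 ?big_set1 // inE. Qed.

Lemma matching_trivIset (T : finType) (g : rel T) M : matching g M -> trivIset M.
Proof. by case=> _ disjM; apply/trivIsetP => m1 m2; apply: disjM. Qed.

Lemma sum_cover_le (T : finType) (w : T -> nat) (P : {set {set T}}) (S : {set T}) :
  trivIset P -> (forall E, E \in P -> E \subset S) ->
  \sum_(E in P) \sum_(t in E) w t <= \sum_(t in S) w t.
Proof.
move=> tiP /bigcupsP subPS; rewrite -big_trivIset //.
by rewrite [leqRHS](big_setID (cover P)) (setIidPr subPS) leq_addr.
Qed.

Lemma ordS_val n (i : 'I_n) :
  (ordS i = i.+1 :> nat /\ i.+1 < n) \/ (ordS i = 0 :> nat /\ i.+1 = n).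
Proof.
case: (ltngtP i.+1 n) (ltn_ord i) => [lt_Si | // | eq_Si] _ /=.
  by left; rewrite modn_small.
by right; rewrite eq_Si modnn.
Qed.

Lemma card_cycle_edges (T : finType) (c : seq T) : #|cycle_edges c| <= size c.
Proof.
apply: leq_trans (leq_imset_card _ _) _.
by apply: leq_trans (card_size _) _; rewrite size_zip size_rot minnn.
Qed.

Lemma cycle_edges_sub (T : finType) (c : seq T) E :
  E \in cycle_edges c -> E \subset [set v in c].
Proof.
case/imsetP=> p p_in ->; apply/subsetP => t; rewrite !inE => /orP[] /eqP->.
  by rewrite -[X in _ \in X](@unzip1_zip _ _ c (rot 1 c)) ?size_rot // map_f.
by rewrite -(mem_rot 1) -[X in _ \in X](@unzip2_zip _ _ c (rot 1 c)) ?size_rot // map_f.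
Qed.

Section CycleEdges.
Variables (T : finType) (x0 : T) (c : seq T).

Definition cycle_edge (i : 'I_(size c)) : {set T} :=
  [set nth x0 c i; nth x0 c (ordS i)].

Lemma cycle_edgesE : cycle_edges c = [set cycle_edge i | i : 'I_(size c)].
Proof.
have nth_pair i : i < size c ->
    nth (x0, x0) (zip c (rot 1 c)) i = (nth x0 c i, nth x0 c (i.+1 %% size c)).
  by move=> lt_ic; rewrite nth_zip ?size_rot // nth_rot1.
have size_pairs : size (zip c (rot 1 c)) = size c by rewrite size_zip size_rot minnn.
apply/setP => E; apply/imsetP/imsetP => [[p /(nthP (x0, x0))[i lt_i <-] ->] | [i _ ->]].
  by rewrite size_pairs in lt_i; exists (Ordinal lt_i); rewrite // nth_pair.
exists (nth (x0, x0) (zip c (rot 1 c)) i); first by rewrite mem_nth ?size_pairs.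
by rewrite nth_pair.
Qed.

Hypotheses (uniq_c : uniq c) (size_c : 2 < size c).

Lemma cycle_edge_inj : injective cycle_edge.
Proof.
move=> i j eq_ij; apply: ord_inj.
have: nth x0 c i \in cycle_edge j by rewrite -eq_ij !inE eqxx.
have: nth x0 c (ordS i) \in cycle_edge j by rewrite -eq_ij !inE eqxx orbT.
rewrite !inE !nth_uniq ?ltn_ord // => /orP[] /eqP eq1 /orP[] /eqP eq2.
all: have := ordS_val i; have := ordS_val j; have := ltn_ord j; lia.
Qed.

Lemma sum_cycle_edges (w : T -> nat) :
  \sum_(E in cycle_edges c) \sum_(t in E) w t = (\sum_(t <- c) w t).*2.
Proof.
rewrite cycle_edgesE big_imset /=; last by move=> i j _ _ /cycle_edge_inj.
have sum_c : \sum_(i < size c) w (nth x0 c i) = \sum_(t <- c) w t.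
  by rewrite (big_nth x0) big_mkord.
have sum_cS : \sum_(i < size c) w (nth x0 c (ordS i)) = \sum_(t <- c) w t.
  by rewrite -sum_c [RHS](reindex_inj (@ordS_inj _)).
rewrite -addnn -{1}sum_c -sum_cS -big_split /=.
apply: eq_big => // i _; rewrite sum_set2 // nth_uniq ?ltn_ord //.
by have := ordS_val i; lia.
Qed.

End CycleEdges.

Lemma M_cycle_heavy_edge (T : finType) (g : rel T) (A : {set T}) M c (w : T -> nat) :
  bipartition g A -> trivIset M -> M_cycle g M c ->
  size c %/ 2 < \sum_(t <- c) w t ->
  exists u v, [set u; v] \in cycle_edges c :\: M /\ 1 < \sum_(t in [set u; v]) w t.
Proof.
move=> bipA tiM [[uniq_c size_c cyc] card_CM] heavy_c.
have x0 : T by case: c size_c {uniq_c cyc card_CM heavy_c} => [|x0].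
have size_even : size c = (size c %/ 2).*2.
  by rewrite divn2 -[LHS]odd_double_half (negbTE (bipartite_cycle_even bipA cyc)).
have card_nonM : #|cycle_edges c :\: M| <= size c %/ 2.
  by rewrite cardsD card_CM; have := card_cycle_edges c; lia.
have sum_M : \sum_(E in cycle_edges c :&: M) \sum_(t in E) w t <= \sum_(t <- c) w t.
  rewrite [leqRHS]big_uniq // -[leqRHS]big_set.
  apply: sum_cover_le => [|E /setIP[/cycle_edges_sub //]].
  exact: trivIsetS (subsetIr _ _) tiM.
have sum_nonM : \sum_(t <- c) w t <= \sum_(E in cycle_edges c :\: M) \sum_(t in E) w t.
  rewrite -(leq_add2l (\sum_(E in cycle_edges c :&: M) \sum_(t in E) w t)).
  by rewrite -big_setID (sum_cycle_edges x0) // -addnn leq_add2r.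
have [E E_nonM heavy_E] :
    exists2 E, E \in cycle_edges c :\: M & 1 < \sum_(t in E) w t.
  apply: exists_gt1_of_card_lt_sum.
  exact: leq_trans (leq_ltn_trans card_nonM heavy_c) sum_nonM.
have /imsetP[i _ E_eq] : E \in [set cycle_edge x0 i | i : 'I_(size c)].
  by rewrite -cycle_edgesE; case/setDP: E_nonM.
exists (nth x0 c i), (nth x0 c (ordS i)).
by rewrite -[[set _; _]]/(cycle_edge x0 i) -E_eq.
Qed.

Lemma size_path_edge_seq (T : finType) (p : seq T) :
  size (path_edge_seq p) = (size p).-1.
Proof. by rewrite size_map size_zip size_behead; lia. Qed.

Lemma nth_path_edge_seq (T : finType) (x0 : T) p i : i < (size p).-1 ->
  nth set0 (path_edge_seq p) i = [set nth x0 p i; nth x0 p i.+1].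
Proof.
move=> lt_i; rewrite (nth_map (x0, x0)) ?nth_zip_cond ?size_zip ?size_behead.
  by rewrite ifT ?nth_behead //; lia.
by lia.
Qed.

Lemma M_path_heavy_edge (T : finType) (g : rel T) M p (w : T -> nat) :
  (forall t, w t <= 1) -> M_path g M p ->
  size p %/ 2 + 2 <= \sum_(t <- p) w t ->
  exists u v, [set u; v] \in path_edges p :\: M /\ 1 < \sum_(t in [set u; v]) w t.
Proof.
move=> w_le1 [[uniq_p _ _] alternating]; rewrite size_path_edge_seq.
case: p uniq_p alternating => [// | x0 q].
rewrite cons_uniq => /andP[_ uniq_q] alternating odd_q.
set k := (size q)./2; have size_q : size q = k.*2.+1.
  by rewrite -[LHS]odd_double_half (odd_q : odd (size q)).
rewrite big_cons (big_nth x0) /= size_q -doubleS divn2 doubleK.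
rewrite big_nat_recr //= sum_double_range => heavy.
have heavy_pairs : k < \sum_(j < k) (w (nth x0 q j.*2) + w (nth x0 q j.*2.+1)).
  by have := w_le1 x0; have := w_le1 (nth x0 q k.*2); lia.
have [j _ heavy_j] :
    exists2 j, j \in 'I_k & 1 < w (nth x0 q j.*2) + w (nth x0 q j.*2.+1).
  by apply: exists_gt1_of_card_lt_sum; rewrite card_ord (eq_bigl xpredT).
have lt_edge : j.*2.+1 < size q by rewrite size_q ltnS ltn_double.
have edge_j : nth set0 (path_edge_seq (x0 :: q)) j.*2.+1
              = [set nth x0 q j.*2; nth x0 q j.*2.+1].
  exact: nth_path_edge_seq.
exists (nth x0 q j.*2), (nth x0 q j.*2.+1); split.
  rewrite -edge_j in_setD alternating ?size_path_edge_seq //= odd_double /=.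
  by rewrite inE mem_nth ?size_path_edge_seq.
by rewrite sum_set2 // nth_uniq ?(ltnW lt_edge) ?(ltn_eqF (ltnSn _)).
Qed.

Theorem lemma3 (T : finType) (g : rel T) (A : {set T}) (M : {set {set T}})
    (c : seq T) (x y : T) :
  simple_graph g -> bipartition g A -> matching g M ->
  x \notin c -> y \notin c -> (x \in A) != (y \in A) ->
  (M_cycle g M c ->
     size c %/ 2 + 1 <= eG g [set x; y] [set v in c] ->
     exists u v, [set u; v] \in cycle_edges c :\: M /\
                 eG g [set x; y] [set u; v] = 2) /\
  (M_path g M c ->
     size c %/ 2 + 2 <= eG g [set x; y] [set v in c] ->
     exists u v, [set u; v] \in path_edges c :\: M /\
                 eG g [set x; y] [set u; v] = 2).
Proof.
move=> _ bipA matchM _ _ sides_xy.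
have neq_xy : x != y by apply: contraNneq sides_xy => ->.
pose w t := (g x t : nat) + g y t.
have w_le1 t : w t <= 1 := bipartition_common_nbr bipA t sides_xy.
have eG_w S : eG g [set x; y] S = \sum_(t in S) w t.
  by rewrite eG_sum; apply: eq_bigr => t _; rewrite sum_set2.
have eG_seq s : uniq s -> eG g [set x; y] [set v in s] = \sum_(t <- s) w t.
  by move=> uniq_s; rewrite eG_w big_set big_uniq.
have eG_edge u v : 1 < \sum_(t in [set u; v]) w t -> eG g [set x; y] [set u; v] = 2.
  move=> heavy; rewrite eG_w; apply/eqP; rewrite eqn_leq heavy andbT.
  have le_card : \sum_(t in [set u; v]) w t <= #|[set u; v]|.
    by rewrite -sum1_card leq_sum.
  by rewrite (leq_trans le_card) // cards2; case: (u != v).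
split => [M_c | M_p] heavy_c.
  have [[uniq_c _ _] _] := M_c.
  rewrite addn1 eG_seq // in heavy_c.
  have [u [v [nonM_uv heavy_uv]]] :=
    M_cycle_heavy_edge bipA (matching_trivIset matchM) M_c heavy_c.
  by exists u, v; split; last exact: eG_edge.
have [[uniq_c _ _] _ _] := M_p.
rewrite eG_seq // in heavy_c.
have [u [v [nonM_uv heavy_uv]]] := M_path_heavy_edge w_le1 M_p heavy_c.
by exists u, v; split; last exact: eG_edge.
Qed.
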